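(* Let $(\mathcal{L},[\cdot,\cdot],\alpha)$ be a Hom-Lie algebra. For all $a(w),b(w),c(w)\in\mathcal{L}[[w,w^{-1}]]$ and $m,n\in\mathbb{Z}_{\ge0}$, the $j$-products satisfy: (1) $(\partial a)_{(n)}b=-n\,a_{(n-1)}b$ and $a_{(n)}(\partial b)=\partial(a_{(n)}b)+n\,a_{(n-1)}b$; (2) if $(a,b)$ is a local pair, then $a_{(n)}b=-\sum_{i\ge0}(-1)^{n+i}\frac{1}{i!}\partial^i(b_{(n+i)}a)$; (3) $\alpha(a)_{(m)}(b_{(n)}c)=\alpha(b)_{(n)}(a_{(m)}c)+\sum_{i=0}^m\binom{m}{i}(a_{(i)}b)_{(m+n-i)}\alpha(c)$.
   Context: A Hom-Lie algebra is a complex vector space $\mathcal{L}$ with a bilinear map $[\cdot,\cdot]$ and linear map $\alpha$ with $[x,y]=-[y,x]$ and $[[x,y],\alpha(z)]+[[y,z],\alpha(x)]+[[z,x],\alpha(y)]=0$. For $a(z)=\sum_{m\in\mathbb{Z}}a_{(m)}z^{-m-1}$ and $b(w)=\sum_n b_{(n)}w^{-n-1}$, set $[a(z),b(w)]=\sum_{m,n}[a_{(m)},b_{(n)}]z^{-m-1}w^{-n-1}$. This is local if $(z-w)^N[a(z),b(w)]=0$ for some positive integer $N$, and then $(a,b)$ is called a local pair. For $j\in\mathbb{Z}_{\ge0}$ the $j$-product is $a_{(j)}b=\mathrm{Res}_z\,(z-w)^j[a(z),b(w)]\in\mathcal{L}[[w,w^{-1}]]$, where $\mathrm{Res}_z$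 takes the coefficient of $z^{-1}$. The operator $\partial$ acts by $(\partial a)(w)=\partial_w a(w)$, and $\alpha$ acts by $\alpha(a)(w)=\sum_m\alpha(a_{(m)})w^{-m-1}$. Terms with factor $n$ and index $n-1$ are zero when $n=0$. *)

From HB Require Import structures.
From mathcomp Require Import all_boot all_algebra.
From mathcomp Require Export reals complex.
Set Implicit Arguments. Unset Strict Implicit. Unset Printing Implicit Defensive.
Import GRing.Theory.
Local Open Scope ring_scope.

Definition is_hom_lie (C : fieldType) (L : lmodType C)
  (br : L -> L -> L) (al : L -> L) : Prop :=
  [/\ (forall (k : C) x y z, br (k *: x + y) z = k *: br x z + br y z),
      (forall (k : C) x y z, br x (k *: y + z) = k *: br x y + br x z),
      (forall (k : C) x y, al (k *: x + y) = k *: al x + al y),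
      (forall x y, br x y = - br y x) &
      (forall x y z, br (br x y) (al z) + br (br y z) (al x)
                     + br (br z x) (al y) = 0)].

(* A formal distribution a(w) = \sum_m a_(m) w^{-m-1} in L[[w,w^{-1}]],
   represented by its mode coefficients m |-> a_(m). *)
Definition fdist (V : Type) := int -> V.

(* A two-variable formal distribution D(z,w) = \sum_{m,n} D m n z^{-m-1} w^{-n-1}. *)
Definition fdist2 (V : Type) := int -> int -> V.

Definition fbracket (V : Type) (br : V -> V -> V) (a b : fdist V) : fdist2 V :=
  fun m n => br (a m) (b n).

(* multiplication by (z - w): coefficient of z^{-m-1} w^{-n-1} in (z-w) D
   is D (m+1) n - D m (n+1). *)
Definition mul_zw (V : zmodType) (D : fdist2 V) : fdist2 V :=
  fun m n => D (m + 1) n - D m (n + 1).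

Definition mul_zw_pow (V : zmodType) (j : nat) (D : fdist2 V) : fdist2 V :=
  iter j (@mul_zw V) D.

(* Res_z : coefficient of z^{-1}, i.e. the mode m = 0 in z. *)
Definition resz (V : Type) (D : fdist2 V) : fdist V := fun n => D 0 n.

Definition jprod (V : zmodType) (br : V -> V -> V) (j : nat) (a b : fdist V)
  : fdist V := resz (mul_zw_pow j (fbracket br a b)).

Definition local_pair (V : zmodType) (br : V -> V -> V) (a b : fdist V) : Prop :=
  exists N : nat, (0 < N)%N /\ mul_zw_pow N (fbracket br a b) = (fun _ _ => 0).

(* (\partial a)(w) = \partial_w a(w).  Since
   \partial_w \sum_m a_(m) w^{-m-1} = \sum_m (-m-1) a_(m) w^{-m-2},
   the coefficient of w^{-m-1} is -m a_(m-1). *)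
Definition fderiv (V : zmodType) (a : fdist V) : fdist V :=
  fun m => a (m - 1) *~ (- m).

Definition falpha (V : Type) (al : V -> V) (a : fdist V) : fdist V :=
  fun m => al (a m).

From HB Require Import structures.
From mathcomp Require Import all_boot all_algebra.
From mathcomp Require Import reals complex boolp functions.
From mathcomp Require Import zify ring.
Set Implicit Arguments. Unset Strict Implicit. Unset Printing Implicit Defensive.
Import GRing.Theory Num.Theory.
Local Open Scope ring_scope.

(* (1) The bracket turns derivatives of a and b into the partial derivatives dz and dw of
   D = [a(z), b(w)]; dz commutes with multiplication by (z - w) up to the term
   n (z - w)^(n-1) D, and the residue in z of a z-derivative vanishes.
   (2) By skew-symmetry b_(j)a is, up to the sign (-1)^j, (z - w)^j D with z and w
   exchanged.  Writing z = w + (z - w), the modes of (z - w)^n D at z^-1 are recovered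
   from those of (z - w)^(n+i) D at w^-1 with integer binomial weights; the identity is
   proved by shifting the mode one step at a time (Pascal's rule), and locality makes
   all sums finite.
   (3) The Hom-Jacobi identity splits [alpha(a), [b, c]] into [alpha(b), [a, c]] and
   [[a, b], alpha(c)].  In variables z, y, x the first summand gives b_(n) applied to
   a_(m) c after exchanging z and y; for the second, (z - x)^m = ((z - y) + (y - x))^m
   expands binomially since the two multiplications commute. *)

Lemma iter_intertwine (T U : Type) (f : T -> T) (g : U -> U) (h : T -> U) :
  (forall x, h (f x) = g (h x)) -> forall n x, h (iter n f x) = iter n g (h x).
Proof. by move=> hfg; elim=> [|n IHn] x //=; rewrite hfg IHn. Qed.

Lemma iter_commute (T : Type) (f g : T -> T) : (forall x, f (g x) = g (f x)) ->
  forall m n x, iter m f (iter n g x) = iter n g (iter m f x).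
Proof.
move=> fg m n x; apply: iter_intertwine => y.
by symmetry; apply: iter_intertwine => z; rewrite fg.
Qed.

Lemma iter_raddf_binomial (T : zmodType) (f g : {additive T -> T}) :
    (forall x, f (g x) = g (f x)) -> forall m x,
  iter m (f \+ g) x = \sum_(i < m.+1) iter i f (iter (m - i) g x) *+ 'C(m, i).
Proof.
move=> fg; elim=> [|m IHm] x; first by rewrite big_ord1 mulr1n.
rewrite iterS IHm /=; set S := \sum_(i < m.+1) _.
have fS : f S = \sum_(i < m.+1) iter i.+1 f (iter (m - i) g x) *+ 'C(m, i).
  by rewrite raddf_sum; apply: eq_bigr => i _; rewrite raddfMn.
have gS : g S = \sum_(i < m.+1) iter i f (iter (m.+1 - i) g x) *+ 'C(m, i).
  have gf y : g (f y) = f (g y) by rewrite fg.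
  rewrite raddf_sum; apply: eq_bigr => i _.
  by rewrite raddfMn (iter_intertwine gf) subSn // -ltnS.
rewrite fS gS [RHS]big_ord_recl.
under [in RHS]eq_bigr => i _ do rewrite lift0 binS mulrnDr.
rewrite big_split /= [X in _ = _ + (X + _)]big_ord_recr /=.
rewrite (bin_small (ltnSn m)) mulr0n addr0.
rewrite [X in _ + X = _]big_ord_recl /= !bin0 addrCA [X in _ + X = _]addrC.
congr (_ + (_ + _)); exact: eq_bigr.
Qed.

Fact iter_is_zmod_morphism (T : zmodType) (f : {additive T -> T}) n :
  zmod_morphism (iter n f).
Proof. by move=> x y; elim: n => [|n IHn] //=; rewrite IHn raddfB. Qed.

HB.instance Definition _ (T : zmodType) (f : {additive T -> T}) n :=
  GRing.isZmodMorphism.Build T T (iter n f) (iter_is_zmod_morphism f n).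

Lemma subrACA (V : zmodType) (a b c d : V) : (a - b) - (c - d) = (a - c) - (b - d).
Proof. by rewrite !opprD addrACA. Qed.

Section TwoVariableDistributions.
Variable V : zmodType.
Implicit Types D : fdist2 V.

Lemma mul_zw_powS j D m n :
  mul_zw_pow j.+1 D m n = mul_zw_pow j D (m + 1) n - mul_zw_pow j D m (n + 1).
Proof. by []. Qed.

Lemma mul_zw_pow_eq0 D : (forall m n, D m n = 0) ->
  forall j m n, mul_zw_pow j D m n = 0.
Proof. by move=> D0; elim=> [|j IHj] m n; [exact: D0 | rewrite mul_zw_powS !IHj subrr]. Qed.

Lemma mul_zw_pow_transpose j D m n :
  mul_zw_pow j (fun m n => - D n m) m n = - mul_zw_pow j D n m *~ (-1) ^+ j.
Proof.
elim: j m n => [|j IHj] m n; first by rewrite expr0 mulr1z.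
by rewrite !mul_zw_powS !IHj exprS mulrzA mulrN1z -mulrzBl !opprD !opprK addrC.
Qed.

Definition dz D : fdist2 V := fun m n => D (m - 1) n *~ - m.
Definition dw D : fdist2 V := fun m n => D m (n - 1) *~ - n.

Lemma mul_zw_dz D m n : mul_zw (dz D) m n = dz (mul_zw D) m n - D m n.
Proof. by rewrite /mul_zw /dz addrK subrK opprD mulrzDr mulrN1z mulrzBl addrAC. Qed.

Lemma mul_zw_dw D m n : mul_zw (dw D) m n = dw (mul_zw D) m n + D m n.
Proof.
by rewrite /mul_zw /dw addrK subrK opprD mulrzDr mulrN1z mulrzBl opprB addrA addrAC.
Qed.

Lemma mul_zw_pow_pred_mulrn j D m n :
  (mul_zw_pow j.-1 D (m + 1) n - mul_zw_pow j.-1 D m (n + 1)) *+ j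
  = mul_zw_pow j D m n *+ j.
Proof. by case: j. Qed.

Lemma mul_zw_pow_dz j D m n :
  mul_zw_pow j (dz D) m n = dz (mul_zw_pow j D) m n - mul_zw_pow j.-1 D m n *+ j.
Proof.
elim: j m n => [|j IHj] m n; first by rewrite mulr0n subr0.
rewrite mul_zw_powS !IHj subrACA -mulrnBl mul_zw_pow_pred_mulrn.
by rewrite -[dz _ _ _ - _]/(mul_zw _ m n) mul_zw_dz mulrS opprD addrA.
Qed.

Lemma mul_zw_pow_dw j D m n :
  mul_zw_pow j (dw D) m n = dw (mul_zw_pow j D) m n + mul_zw_pow j.-1 D m n *+ j.
Proof.
elim: j m n => [|j IHj] m n; first by rewrite mulr0n addr0.
rewrite mul_zw_powS !IHj opprD addrACA -mulrnBl mul_zw_pow_pred_mulrn.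
by rewrite -[dw _ _ _ - _]/(mul_zw _ m n) mul_zw_dw mulrS addrA.
Qed.

Lemma mul_zw_pow_comp (W : zmodType) (f : V -> W) : {morph f : u v / u - v} ->
  forall j D m n, f (mul_zw_pow j D m n) = mul_zw_pow j (fun m n => f (D m n)) m n.
Proof. by move=> fB; elim=> [|j IHj] D m n //; rewrite !mul_zw_powS fB !IHj. Qed.

End TwoVariableDistributions.

Definition ffactz (k : int) (i : nat) : int := \prod_(r < i) (k - r%:Z).

Lemma ffactz0 k : ffactz k 0 = 1.
Proof. by rewrite /ffactz big_ord0. Qed.

Lemma ffactzS k i : ffactz k i.+1 = ffactz k i * (k - i%:Z).
Proof. by rewrite /ffactz big_ord_recr. Qed.

Lemma ffactzSl k i : ffactz k i.+1 = k * ffactz (k - 1) i.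
Proof.
rewrite /ffactz big_ord_recl subr0; congr (_ * _); apply: eq_bigr => r _.
by rewrite lift0 -addn1 PoszD opprD addrA addrAC.
Qed.

Lemma iter_fderiv (V : zmodType) (f : fdist V) i k :
  iter i (@fderiv V) f k = f (k - i%:Z) *~ ((-1) ^+ i * ffactz k i).
Proof.
elim: i k => [|i IHi] k; first by rewrite subr0 expr0 ffactz0 mulr1 mulr1z.
have -> : k - i.+1%:Z = k - 1 - i%:Z by lia.
by rewrite iterS {1}/fderiv IHi -mulrzA ffactzSl exprS; congr (_ *~ _); ring.
Qed.

Section IntegerBinomials.
Variable F : numFieldType.

Definition binz (k : int) (i : nat) : F := (ffactz k i)%:~R / (i`!)%:R.

Lemma binz0 k : binz k 0 = 1.
Proof. by rewrite /binz ffactz0 fact0 divr1. Qed.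

Lemma bin0z i : binz 0 i.+1 = 0.
Proof. by rewrite /binz ffactzSl !mul0r. Qed.

Lemma binzS k i : binz (k + 1) i.+1 = binz k i.+1 + binz k i.
Proof.
have i1_neq0 : 1 + i%:R != 0 :> F by rewrite addrC natr1 pnatr_eq0.
have fact_neq0 : i`!%:R != 0 :> F by rewrite pnatr_eq0 -lt0n fact_gt0.
rewrite /binz ffactzSl addrK ffactzS factS natrM.
by field; rewrite fact_neq0 i1_neq0.
Qed.

End IntegerBinomials.

Arguments binz {F} k i.

Lemma shift_invariant (T : Type) (g : int -> T) :
  (forall t, g (t + 1) = g t) -> forall t, g t = g 0.
Proof.
move=> gS; elim/int_rect => [|n IHn|n IHn] //; first by rewrite -IHn -(gS n) -PoszD addn1.
by rewrite -IHn -(gS (- n.+1%:Z)); have -> : - n.+1%:Z + 1 = - n%:Z by lia.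
Qed.

Section TaylorExpansion.
Variables (F : numFieldType) (V : lmodType F).

Lemma sum_binzS_telescope (t : int) (f : nat -> V) M :
  \sum_(i < M.+1) ((-1) ^+ i * binz (t + 1) i) *: f i
  = \sum_(i < M.+1) ((-1) ^+ i * binz t i) *: (f i - f i.+1)
    + ((-1) ^+ M * binz t M) *: f M.+1.
Proof.
elim: M => [|M IHM]; first by rewrite !big_ord1 !binz0 expr0 mulr1 !scale1r subrK.
rewrite big_ord_recr IHM /= [in RHS]big_ord_recr /= -!addrA; congr (_ + _).
by rewrite scalerBr subrK -scalerDl binzS exprS; congr (_ *: _); ring.
Qed.

(* Expansion of (z - w)^n D around z = w, with the z-mode moved t steps to w. *)
Lemma mul_zw_pow_taylor (D : fdist2 V) N :
    (forall j m q, (N <= j)%N -> mul_zw_pow j D m q = 0) -> forall n t q,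
  \sum_(i < N.+1) ((-1) ^+ i * binz t i) *: mul_zw_pow (n + i) D (t - i%:Z) (q - t)
  = mul_zw_pow n D 0 q.
Proof.
move=> DN n t q.
pose g t := \sum_(i < N.+1)
  ((-1) ^+ i * binz t i) *: mul_zw_pow (n + i) D (t - i%:Z) (q - t).
have gS s : g (s + 1) = g s.
  rewrite /g (sum_binzS_telescope s
    (fun i => mul_zw_pow (n + i) D (s + 1 - i%:Z) (q - (s + 1)))).
  rewrite DN ?scaler0 ?addr0; last by lia.
  apply: eq_bigr => i _; rewrite addnS mul_zw_powS.
  have -> : s + 1 - i.+1%:Z + 1 = s + 1 - i%:Z by lia.
  have -> : s + 1 - i.+1%:Z = s - i%:Z by lia.
  have -> : q - (s + 1) + 1 = q - s by lia.
  by rewrite opprB addrC subrK.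
rewrite -/(g t) (shift_invariant gS) /g big_ord_recl big1 ?addr0.
  by rewrite binz0 expr0 mulr1 scale1r addn0.
by move=> i _; rewrite lift0 bin0z mulr0 scale0r.
Qed.

End TaylorExpansion.

Section SkewSymmetry.
Variables (V : zmodType) (br : V -> V -> V).
Hypothesis br_skew : forall x y, br x y = - br y x.

Lemma jprod_swap j (a b : fdist V) k :
  jprod br j b a k = - mul_zw_pow j (fbracket br a b) k 0 *~ (-1) ^+ j.
Proof.
rewrite /jprod /resz -mul_zw_pow_transpose; congr mul_zw_pow.
by apply/funext => m; apply/funext => n; rewrite /fbracket br_skew.
Qed.

End SkewSymmetry.

Lemma local_pair_mul_zw_pow_eq0 (V : zmodType) (br : V -> V -> V) (a b : fdist V) :
  local_pair br a b ->
  exists N, forall j m n, (N <= j)%N -> mul_zw_pow j (fbracket br a b) m n = 0.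
Proof.
case=> N [_ abN]; exists N => j m n /subnK <-.
by rewrite /mul_zw_pow iterD -/(mul_zw_pow N _) abN; apply: mul_zw_pow_eq0.
Qed.

Section LocalSkewExpansion.
Variables (F : numFieldType) (V : lmodType F) (br : V -> V -> V).
Hypothesis br_skew : forall x y, br x y = - br y x.

Lemma jprod_local_skew (a b : fdist V) : local_pair br a b -> forall n : nat,
  exists M : nat,
    (forall i : nat, (M <= i)%N ->
       forall k, iter i (@fderiv V) (jprod br (n + i) b a) k = 0) /\
    (forall k : int,
       jprod br n a b k
       = - \sum_(i < M)
             (((-1) ^+ (n + i) / (i`!)%:R : F)
                *: iter i (@fderiv V) (jprod br (n + i) b a) k)).
Proof.
case/local_pair_mul_zw_pow_eq0 => N abN n; exists N.+1; split.
  move=> i iN k; rewrite iter_fderiv (jprod_swap br_skew) abN; last by lia.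
  by rewrite oppr0 !mul0rz.
move=> k; rewrite -[LHS](mul_zw_pow_taylor abN n k k) -sumrN subrr.
apply: eq_bigr => i _; rewrite iter_fderiv (jprod_swap br_skew).
rewrite -!mulrzA mulNrz -scaler_int scalerN opprK scalerA; congr (_ *: _).
have sign2 : (-1) ^+ (n + i) * (-1) ^+ (n + i) = 1 :> F by rewrite -expr2 sqrr_sign.
by rewrite /binz !intrM !intr_sign -[LHS]mul1r -{1}sign2; ring.
Qed.

End LocalSkewExpansion.

Definition fdist3 (V : Type) := int -> int -> int -> V.

Section ThreeVariableDistributions.
Variable V : zmodType.
Implicit Types X Y : fdist3 V.

Lemma fdist3_addE X Y p q r : (X + Y) p q r = X p q r + Y p q r.
Proof. by []. Qed.

Lemma fdist3_subE X Y p q r : (X - Y) p q r = X p q r - Y p q r.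
Proof. by []. Qed.

Lemma fdist3_sumE (I : Type) (s : seq I) (G : I -> fdist3 V) p q r :
  (\sum_(i <- s) G i) p q r = \sum_(i <- s) G i p q r.
Proof. by rewrite !fct_sumE. Qed.

Lemma fdist3_natmulE X c p q r : (X *+ c) p q r = X p q r *+ c.
Proof. by rewrite !natmulfctE. Qed.

(* For X(z1, z2, z3), [mulij X] is (zi - zj) X and [swap12 X] exchanges z1 and z2. *)
Definition mul12 X : fdist3 V := fun p q r => X (p + 1) q r - X p (q + 1) r.
Definition mul13 X : fdist3 V := fun p q r => X (p + 1) q r - X p q (r + 1).
Definition mul23 X : fdist3 V := fun p q r => X p (q + 1) r - X p q (r + 1).
Definition swap12 X : fdist3 V := fun p q r => X q p r.

Fact mul12_is_zmod_morphism : zmod_morphism mul12.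
Proof.
move=> X Y; apply/funext => p; apply/funext => q; apply/funext => r.
by rewrite /mul12 /= !fdist3_subE subrACA.
Qed.

Fact mul13_is_zmod_morphism : zmod_morphism mul13.
Proof.
move=> X Y; apply/funext => p; apply/funext => q; apply/funext => r.
by rewrite /mul13 /= !fdist3_subE subrACA.
Qed.

Fact mul23_is_zmod_morphism : zmod_morphism mul23.
Proof.
move=> X Y; apply/funext => p; apply/funext => q; apply/funext => r.
by rewrite /mul23 /= !fdist3_subE subrACA.
Qed.

HB.instance Definition _ :=
  GRing.isZmodMorphism.Build (fdist3 V) (fdist3 V) mul12 mul12_is_zmod_morphism.
HB.instance Definition _ :=
  GRing.isZmodMorphism.Build (fdist3 V) (fdist3 V) mul13 mul13_is_zmod_morphism.
HB.instance Definition _ :=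
  GRing.isZmodMorphism.Build (fdist3 V) (fdist3 V) mul23 mul23_is_zmod_morphism.

Lemma mul13E : mul13 = mul12 \+ mul23.
Proof.
apply/funext => X; apply/funext => p; apply/funext => q; apply/funext => r.
by rewrite /= fdist3_addE /mul12 /mul13 /mul23 subrKA.
Qed.

Lemma mul12_mul23 X : mul12 (mul23 X) = mul23 (mul12 X).
Proof.
by apply/funext => p; apply/funext => q; apply/funext => r; rewrite /mul12 /mul23 subrACA.
Qed.

Lemma mul13_mul23 X : mul13 (mul23 X) = mul23 (mul13 X).
Proof.
by apply/funext => p; apply/funext => q; apply/funext => r; rewrite /mul13 /mul23 subrACA.
Qed.

Lemma swap12_mul13 X : swap12 (mul13 X) = mul23 (swap12 X). Proof. by []. Qed.

Lemma swap12_mul23 X : swap12 (mul23 X) = mul13 (swap12 X). Proof. by []. Qed.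

Lemma iter_mul12 n X p q r :
  iter n mul12 X p q r = mul_zw_pow n (fun p q => X p q r) p q.
Proof. by elim: n p q r => [|n IHn] p q r //; rewrite iterS {1}/mul12 !IHn. Qed.

Lemma iter_mul13 n X p q r :
  iter n mul13 X p q r = mul_zw_pow n (fun p r => X p q r) p r.
Proof. by elim: n p q r => [|n IHn] p q r //; rewrite iterS {1}/mul13 !IHn. Qed.

Lemma iter_mul23 n X p q r : iter n mul23 X p q r = mul_zw_pow n (X p) q r.
Proof. by elim: n p q r => [|n IHn] p q r //; rewrite iterS {1}/mul23 !IHn. Qed.

Lemma iter_mul13_binomial m X :
  iter m mul13 X = \sum_(i < m.+1) iter i mul12 (iter (m - i) mul23 X) *+ 'C(m, i).
Proof. by rewrite mul13E; apply: iter_raddf_binomial; exact: mul12_mul23. Qed.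

End ThreeVariableDistributions.

Arguments mul12 {V}.
Arguments mul13 {V}.
Arguments mul23 {V}.
Arguments swap12 {V}.

Section HomLieBracket.
Variables (C : pzRingType) (L : lmodType C) (br : L -> L -> L) (al : L -> L).
Hypothesis br_linearr : forall (k : C) x y z, br x (k *: y + z) = k *: br x y + br x z.
Hypothesis br_skew : forall x y, br x y = - br y x.
Hypothesis hom_jacobi : forall x y z,
  br (br x y) (al z) + br (br y z) (al x) + br (br z x) (al y) = 0.

Lemma brDr x y z : br x (y + z) = br x y + br x z.
Proof. by have := br_linearr 1 x y z; rewrite !scale1r. Qed.

Lemma br0r x : br x 0 = 0.
Proof. by apply/(addrI (br x 0)); rewrite -brDr !addr0. Qed.

Lemma brNr x y : br x (- y) = - br x y.
Proof. by apply/(addrI (br x y)); rewrite -brDr !subrr br0r. Qed.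

Lemma brBr x y z : br x (y - z) = br x y - br x z.
Proof. by rewrite brDr brNr. Qed.

Lemma brBl x y z : br (x - y) z = br x z - br y z.
Proof. by rewrite !(br_skew _ z) brBr opprD. Qed.

Lemma br_mulzr x y (n : int) : br x (y *~ n) = br x y *~ n.
Proof. by rewrite -!scaler_int -[_ *: y]addr0 br_linearr br0r addr0. Qed.

Lemma br_mulzl x y (n : int) : br (x *~ n) y = br x y *~ n.
Proof. by rewrite br_skew br_mulzr -mulNrz -br_skew. Qed.

Lemma hom_jacobi_leibniz x y z :
  br (al x) (br y z) = br (al y) (br x z) + br (br x y) (al z).
Proof.
have := hom_jacobi x y z.
rewrite (br_skew (br y z)) (br_skew (br z x)) (br_skew z x) brNr opprK addrAC.
by move/eqP; rewrite subr_eq0 addrC => /eqP.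
Qed.

Lemma jprod_fderivl (a b : fdist L) n k :
  jprod br n (fderiv a) b k = - (jprod br n.-1 a b k *+ n).
Proof.
rewrite /jprod /resz; have -> : fbracket br (fderiv a) b = dz (fbracket br a b).
  by apply/funext => m; apply/funext => q; rewrite /fbracket /fderiv /dz br_mulzl.
by rewrite mul_zw_pow_dz {1}/dz oppr0 mulr0z sub0r.
Qed.

Lemma jprod_fderivr (a b : fdist L) n k :
  jprod br n a (fderiv b) k = fderiv (jprod br n a b) k + jprod br n.-1 a b k *+ n.
Proof.
rewrite /jprod /resz; have -> : fbracket br a (fderiv b) = dw (fbracket br a b).
  by apply/funext => m; apply/funext => q; rewrite /fbracket /fderiv /dw br_mulzr.
by rewrite mul_zw_pow_dw.
Qed.

Lemma jprod_falpha_jprod (x y z : fdist L) m n k :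
  jprod br m (falpha al x) (jprod br n y z) k
  = iter m mul13 (iter n mul23 (fun p q r => br (al (x p)) (br (y q) (z r)))) 0 0 k.
Proof.
rewrite iter_mul13 /jprod /resz; congr mul_zw_pow; apply/funext => p; apply/funext => r.
by rewrite iter_mul23 /fbracket /falpha (mul_zw_pow_comp (brBr _)).
Qed.

Lemma jprod_jprod_falpha (x y z : fdist L) i j k :
  jprod br j (jprod br i x y) (falpha al z) k
  = iter j mul23 (iter i mul12 (fun p q r => br (br (x p) (y q)) (al (z r)))) 0 0 k.
Proof.
rewrite iter_mul23 /jprod /resz; congr mul_zw_pow; apply/funext => q; apply/funext => r.
rewrite iter_mul12 /fbracket /falpha.
by rewrite (mul_zw_pow_comp (f := br^~ (al (z r))) (fun u v => brBl u v _)).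
Qed.

Lemma jprod_hom_jacobi (a b c : fdist L) m n k :
  jprod br m (falpha al a) (jprod br n b c) k
  = jprod br n (falpha al b) (jprod br m a c) k
    + \sum_(i < m.+1) (jprod br (m + n - i) (jprod br i a b) (falpha al c) k *+ 'C(m, i)).
Proof.
pose U p q r := br (al (b p)) (br (a q) (c r)).
pose W p q r := br (br (a p) (b q)) (al (c r)).
rewrite jprod_falpha_jprod.
have -> : (fun p q r => br (al (a p)) (br (b q) (c r))) = swap12 U + W.
  by apply/funext => p; apply/funext => q; apply/funext => r; rewrite hom_jacobi_leibniz.
rewrite !raddfD /= fdist3_addE; congr (_ + _).
  rewrite -(iter_intertwine (@swap12_mul13 _)) -(iter_intertwine (@swap12_mul23 _)).
  by rewrite jprod_falpha_jprod (iter_commute (@mul13_mul23 _)).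
rewrite (iter_commute (@mul13_mul23 _)) iter_mul13_binomial raddf_sum fdist3_sumE.
apply: eq_bigr => i _; rewrite raddfMn /= fdist3_natmulE jprod_jprod_falpha.
rewrite (iter_commute (@mul12_mul23 _)) -iterD; congr (iter _ _ _ _ _ _ *+ _).
by have := ltn_ord i; lia.
Qed.

End HomLieBracket.

Theorem proposition4p7 (R : realType) (L : lmodType R[i])
  (br : L -> L -> L) (al : L -> L) :
  is_hom_lie br al ->
  (* (1) *)
  (forall (a b : fdist L) (n : nat) (k : int),
      jprod br n (fderiv a) b k = - (jprod br n.-1 a b k *+ n)) /\
  (forall (a b : fdist L) (n : nat) (k : int),
      jprod br n a (fderiv b) k
      = fderiv (jprod br n a b) k + jprod br n.-1 a b k *+ n) /\
  (* (2) : the sum over i >= 0 has only finitely many nonzero terms *)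
  (forall (a b : fdist L), local_pair br a b ->
    forall n : nat,
    exists M : nat,
      (forall i : nat, (M <= i)%N ->
         forall k, iter i (@fderiv L) (jprod br (n + i) b a) k = 0) /\
      (forall k : int,
         jprod br n a b k
         = - \sum_(i < M)
               (((-1) ^+ (n + i) / (i`!)%:R : R[i])
                  *: iter i (@fderiv L) (jprod br (n + i) b a) k))) /\
  (* (3) *)
  (forall (a b c : fdist L) (m n : nat) (k : int),
      jprod br m (falpha al a) (jprod br n b c) k
      = jprod br n (falpha al b) (jprod br m a c) k
        + \sum_(i < m.+1)
            (jprod br (m + n - i) (jprod br i a b) (falpha al c) k *+ 'C(m, i))).
Proof.
case=> _ br_linearr _ br_skew hom_jacobi.
split; first exact: jprod_fderivl.
split; first exact: jprod_fderivr.
split; first exact: jprod_local_skew.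
exact: jprod_hom_jacobi.
Qed.
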